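(* Let $S$ be a right LCM monoid, let $F$ be an accurate foundation set for $S$ and let $s\in S_c$. Then $s\cdot F=\{sf\mid f\in F\}$ and $F\cdot s=\{fs\mid f\in F\}$ are accurate foundation sets for $S$. Moreover, for every unital $*$-homomorphism $\pi$ from $C^*(S)$ into a unital $C^*$-algebra, the relation $\sum_{f\in s\cdot F}\pi(e_{fS})=1$ holds if and only if both $\sum_{f\in F}\pi(e_{fS})=1$ and $\pi(v_sv_s^* )=1$ hold; and likewise the relation $\sum_{f\in F\cdot s}\pi(e_{fS})=1$ holds if and only if both $\sum_{f\in F}\pi(e_{fS})=1$ and $\pi(v_sv_s^* )=1$ hold.
   Context: A right LCM monoid is a countable discrete monoid $S$ that is left cancellative and such that for all $s,t\in S$ the intersection $sS\cap tS$ is either empty or equal to $rS$ for some $r\in S$. A finite subset $F\subset S$ is a foundation set if for every $t\in S$ there is $s\in F$ with $sS\cap tS\neq\emptyset$; it is accurate if $fS\cap f'S=\emptyset$ for distinct $f,f'\in F$. The core subsemigroup is $S_c=\{s\in S\mid sS\cap tS\neq\emptyset \text{ for all } t\in S\}$. The full semigroup $C^*$-algebra $C^*(S)$ (in the sense of Li) is the universal $C^*$-algebra generated by isometries $\{v_s: s\in S\}$ and projections $\{e_X : X\in\mathcal{J}(S)\}$, where $\mathcal{J}(S)=\{\emptyset\}\cup\{sS: s\in S\}$, subject to $v_{st}=v_sv_t$, $v_se_Xv_s^*=e_{sX}$, $e_S=1$, $e_\emptyset=0$, $e_Xe_Y=e_{X\cap Y}$; in particular $e_{sS}=v_sv_s^*$.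 *)

From HB Require Import structures.
From mathcomp Require Import all_boot all_order all_algebra.
From mathcomp Require Import boolp classical_sets reals.
From mathcomp.real_closed Require Import complex.
From mathcomp Require Import finmap.

Set Implicit Arguments.
Unset Strict Implicit.
Unset Printing Implicit Defensive.

Import Order.TTheory GRing.Theory Num.Theory.
Local Open Scope classical_set_scope.
Local Open Scope ring_scope.

Definition rideal (S : Type) (mul : S -> S -> S) (s : S) : set S :=
  [set mul s a | a in [set: S]].

Definition is_monoid (S : Type) (mul : S -> S -> S) (one : S) : Prop :=
  [/\ (forall x y z, mul x (mul y z) = mul (mul x y) z),
      (forall x, mul one x = x) & (forall x, mul x one = x)].

Definition left_cancellative (S : Type) (mul : S -> S -> S) : Prop :=
  forall s x y, mul s x = mul s y -> x = y.

Definition right_LCM_prop (S : Type) (mul : S -> S -> S) : Prop :=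
  forall s t, rideal mul s `&` rideal mul t = set0 \/
              exists r, rideal mul s `&` rideal mul t = rideal mul r.

Definition is_right_LCM_monoid (S : countType) (mul : S -> S -> S) (one : S)
  : Prop :=
  [/\ is_monoid mul one, left_cancellative mul & right_LCM_prop mul].

Definition foundation_set (S : countType) (mul : S -> S -> S) (F : {fset S})
  : Prop :=
  forall t, exists2 s, s \in F & rideal mul s `&` rideal mul t !=set0.

Definition accurate (S : countType) (mul : S -> S -> S) (F : {fset S}) : Prop :=
  forall f f', f \in F -> f' \in F -> f <> f' ->
    rideal mul f `&` rideal mul f' = set0.

Definition core_elt (S : Type) (mul : S -> S -> S) (s : S) : Prop :=
  forall t, rideal mul s `&` rideal mul t !=set0.

Definition lmul_fset (S : countType) (mul : S -> S -> S) (s : S) (F : {fset S})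
  : {fset S} := [fset mul s f | f in F]%fset.
Definition rmul_fset (S : countType) (mul : S -> S -> S) (F : {fset S}) (s : S)
  : {fset S} := [fset mul f s | f in F]%fset.

Definition JS (S : Type) (mul : S -> S -> S) (X : set S) : Prop :=
  X = set0 \/ exists s, X = rideal mul s.

Definition is_unital_cstar_algebra (R : realType) (A : algType R[i])
  (star : A -> A) (nrm : A -> R) : Prop :=
      (forall x y, star (x + y) = star x + star y) /\
      (forall (c : R[i]) x, star (c *: x) = conjc c *: star x) /\
      (forall x y, star (x * y) = star y * star x) /\
      (forall x, star (star x) = x) /\
      (forall x, nrm x = 0 -> x = 0) /\
      (forall x y, nrm (x + y) <= nrm x + nrm y) /\
      (forall (c : R[i]) x, nrm (c *: x) = ComplexField.Normc.normc c * nrm x) /\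
      (forall x y, nrm (x * y) <= nrm x * nrm y) /\
      (forall x, nrm (star x * x) = nrm x ^+ 2) /\
      (forall u : nat -> A,
         (forall e : R, 0 < e -> exists N, forall m n, (N <= m)%N -> (N <= n)%N ->
              nrm (u m - u n) < e) ->
         exists l, forall e : R, 0 < e -> exists N, forall n, (N <= n)%N ->
              nrm (u n - l) < e).

(* Unital *-homomorphisms pi : C*(S) -> A correspond, by the universal
   property of Li's full semigroup C*-algebra C*(S), exactly to families
   V s := pi(v_s), E X := pi(e_X) (X ∈ J(S)) in A satisfying the defining
   relations of C*(S).  [li_rep] states these relations.                  *)
Definition li_rep (S : countType) (mul : S -> S -> S) (one : S)
  (R : realType) (A : algType R[i]) (star : A -> A)
  (V : S -> A) (E : set S -> A) : Prop :=
      (forall s, star (V s) * V s = 1) /\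
      (forall X, JS mul X -> star (E X) = E X /\ E X * E X = E X) /\
      (forall s t, V (mul s t) = V s * V t) /\
      (forall s X, JS mul X -> V s * E X * star (V s) = E (mul s @` X)) /\
      E [set: S] = 1 /\
      E set0 = 0 /\
      (forall X Y, JS mul X -> JS mul Y -> E X * E Y = E (X `&` Y)).

From HB Require Import structures.
From mathcomp Require Import all_boot all_order all_algebra.
From mathcomp Require Import boolp classical_sets reals.
From mathcomp.real_closed Require Import complex.
From mathcomp Require Import finmap.
Import Order.TTheory GRing.Theory Num.Theory.
Local Open Scope classical_set_scope.
Local Open Scope ring_scope.

Set Implicit Arguments.
Unset Strict Implicit.
Unset Printing Implicit Defensive.

(* Since s is in the core, sS meets every tS, so s.F and F.s are again
   foundation sets; s.F stays accurate by left cancellation, and F.s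
   because fsS is contained in fS.  In a
   representation, the sum over s.F is the conjugate V_s P V_s^* of the sum
   P over F, and the sum over F.s is sum_f V_f E_sS V_f^*; as the V_f
   (f in F) are isometries with mutually orthogonal ranges, either sum is
   1 exactly when P = 1 and V_s V_s^* = E_sS = 1. *)

Section RightIdeals.

Variables (S : countType) (mul : S -> S -> S).

Lemma JS_rideal f : JS mul (rideal mul f).
Proof. by right; exists f. Qed.

Hypothesis mulA : forall x y z, mul x (mul y z) = mul (mul x y) z.

Lemma image_rideal s f : mul s @` rideal mul f = rideal mul (mul s f).
Proof.
apply/seteqP; split => x /=.
- by case=> y [a _ <-] <-; exists a => //; rewrite mulA.
- by case=> a _ <-; exists (mul f a); [exists a | rewrite mulA].
Qed.

Lemma accurate_mul_eq (F : {fset S}) f f' : accurate mul F ->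
  f \in F -> f' \in F -> forall a b, mul f a = mul f' b -> f = f'.
Proof.
move=> HFa Ff Ff' a b eab; apply: contrapT => neq.
have : (rideal mul f `&` rideal mul f') (mul f a).
  by split; [exists a | exists b].
by rewrite HFa.
Qed.

Lemma foundation_set_lmul (F : {fset S}) s :
  core_elt mul s -> foundation_set mul F -> foundation_set mul (lmul_fset mul s F).
Proof.
move=> Hs HFf t; have [x [[a _ Ha] [b _ Hb]]] := Hs t.
have [f Ff [y [[c _ Hc] [d _ Hd]]]] := HFf a.
exists (mul s f); first by apply/imfsetP; exists f.
exists (mul (mul s f) c); split; first by exists c.
by exists (mul b d) => //; rewrite mulA Hb -Ha -mulA Hd -mulA Hc.
Qed.

Lemma foundation_set_rmul (F : {fset S}) s :
  core_elt mul s -> foundation_set mul F -> foundation_set mul (rmul_fset mul F s).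
Proof.
move=> Hs HFf t; have [f Ff [y [[c _ Hc] [d _ Hd]]]] := HFf t.
have [x [[a _ Ha] [b _ Hb]]] := Hs c.
exists (mul f s); first by apply/imfsetP; exists f.
exists (mul (mul f s) a); split; first by exists a.
by exists (mul d b) => //; rewrite -mulA Ha -Hb mulA Hd -Hc -mulA.
Qed.

Lemma accurate_rmul (F : {fset S}) s :
  accurate mul F -> accurate mul (rmul_fset mul F s).
Proof.
move=> HFa g g' /imfsetP[f Ff ->] /imfsetP[f' Ff' ->] neq.
apply/seteqP; split => x //= [[a _ Ha] [b _ Hb]].
apply: neq; congr (mul _ s).
apply: (accurate_mul_eq HFa Ff Ff' (a := mul s a) (b := mul s b)).
by rewrite !mulA Ha Hb.
Qed.

Hypothesis mul_canc : left_cancellative mul.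

Lemma accurate_lmul (F : {fset S}) s :
  accurate mul F -> accurate mul (lmul_fset mul s F).
Proof.
move=> HFa g g' /imfsetP[f Ff ->] /imfsetP[f' Ff' ->] neq.
apply/seteqP; split => x //= [[a _ Ha] [b _ Hb]].
apply: neq; congr (mul s _).
apply: (accurate_mul_eq HFa Ff Ff' (a := a) (b := b)).
by apply: (@mul_canc s); rewrite !mulA Ha Hb.
Qed.

End RightIdeals.

Section Isometries.

Variable A : pzRingType.

Lemma conj_isometry_eq1 (v w x : A) :
  w * v = 1 -> v * x * w = 1 <-> x = 1 /\ v * w = 1.
Proof.
move=> wv; split=> [vxw | [-> vw]]; last by rewrite mulr1.
have x1 : x = 1.
  have : w * (v * x * w) * v = 1 by rewrite vxw mulr1.
  by rewrite !mulrA wv mul1r -mulrA wv mulr1.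
by split=> //; rewrite -vxw x1 mulr1.
Qed.

Lemma sum_conj_isometries_eq1 (I : eqType) (r : seq I) i0 (v w : I -> A) x :
  i0 \in r -> uniq r -> (forall i, w i * v i = 1) ->
  {in r &, forall i j, i != j -> w i * v j = 0} ->
  \sum_(i <- r) v i * x * w i = 1 <-> \sum_(i <- r) v i * w i = 1 /\ x = 1.
Proof.
move=> ri0 ur wv orth; split=> [sum1 | [vw ->]]; last first.
  by under eq_bigr do rewrite mulr1.
have x1 : x = 1.
  have := congr1 (fun y => w i0 * y * v i0) sum1.
  rewrite /= mulr1 wv mulr_sumr mulr_suml (bigD1_seq i0) //= big1_seq ?addr0.
    by rewrite !mulrA wv mul1r -mulrA wv mulr1.
  by move=> i /andP[ni ri]; rewrite !mulrA orth ?mul0r // eq_sym.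
by split=> //; move: sum1; rewrite x1; under eq_bigr do rewrite mulr1.
Qed.

End Isometries.

Section Representation.

Variables (S : countType) (mul : S -> S -> S) (one : S).
Hypothesis mulA : forall x y z, mul x (mul y z) = mul (mul x y) z.
Hypothesis mul1 : forall x, mul one x = x.
Variables (R : realType) (A : algType R[i]) (star : A -> A).
Variables (V : S -> A) (E : set S -> A).
Hypothesis HV : li_rep mul one star V E.

Lemma li_rep_isometry f : star (V f) * V f = 1.
Proof. by case: HV. Qed.

Lemma li_rep_E_rideal f : E (rideal mul f) = V f * star (V f).
Proof.
have [_ [_ [_ [VE [ET _]]]]] := HV.
have JST : JS mul [set: S].
  by right; exists one; apply/seteqP; split => x // _; exists x.
by have := VE f setT JST; rewrite ET mulr1 => ->.
Qed.

Lemma li_rep_E_rideal_mul f a :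
  E (rideal mul (mul f a)) = V f * E (rideal mul a) * star (V f).
Proof.
have [_ [_ [_ [VE _]]]] := HV; rewrite VE ?image_rideal //; exact: JS_rideal.
Qed.

Lemma li_rep_orthogonal f g : rideal mul f `&` rideal mul g = set0 ->
  star (V f) * V g = 0.
Proof.
move=> fg0; have [_ [_ [_ [_ [_ [E0 EI]]]]]] := HV.
have EfEg : E (rideal mul f) * E (rideal mul g) = 0.
  by rewrite EI ?fg0 ?E0 //; apply: JS_rideal.
have Vf : star (V f) * E (rideal mul f) = star (V f).
  by rewrite li_rep_E_rideal mulrA li_rep_isometry mul1r.
have Vg : E (rideal mul g) * V g = V g.
  by rewrite li_rep_E_rideal -mulrA li_rep_isometry mulr1.
by rewrite -Vf -Vg mulrA -(mulrA (star (V f))) EfEg mulr0 mul0r.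
Qed.

End Representation.

Theorem corollary2p4 (S : countType) (mul : S -> S -> S) (one : S)
  (HS : is_right_LCM_monoid mul one)
  (F : {fset S}) (HFf : foundation_set mul F) (HFa : accurate mul F)
  (s : S) (Hs : core_elt mul s) :
  [/\ foundation_set mul (lmul_fset mul s F) /\ accurate mul (lmul_fset mul s F),
      foundation_set mul (rmul_fset mul F s) /\ accurate mul (rmul_fset mul F s) &
      forall (R : realType) (A : algType R[i]) (star : A -> A) (nrm : A -> R),
        is_unital_cstar_algebra star nrm ->
        forall (V : S -> A) (E : set S -> A), li_rep mul one star V E ->
        ((\sum_(f <- lmul_fset mul s F) E (rideal mul f) = 1) <->
           ((\sum_(f <- F) E (rideal mul f) = 1) /\ V s * star (V s) = 1)) /\
        ((\sum_(f <- rmul_fset mul F s) E (rideal mul f) = 1) <->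
           ((\sum_(f <- F) E (rideal mul f) = 1) /\ V s * star (V s) = 1))].
Proof.
case: HS => [[mulA mul1 _] mul_canc _].
have [f0 Ff0 _] := HFf one.
split.
- by split; [exact: foundation_set_lmul | exact: accurate_lmul].
- by split; [exact: foundation_set_rmul | exact: accurate_rmul].
move=> R A star nrm _ V E HV.
have P_eq : \sum_(f <- F) E (rideal mul f) = \sum_(f <- F) V f * star (V f).
  by apply: eq_bigr => f _; rewrite (li_rep_E_rideal mul1 HV).
split.
- rewrite /lmul_fset big_imfset /=; last by move=> x y _ _; apply: mul_canc.
  under eq_bigr do rewrite (li_rep_E_rideal_mul mulA HV).
  rewrite -mulr_suml -mulr_sumr.
  exact: conj_isometry_eq1 (\sum_(f <- F) E (rideal mul f)) (li_rep_isometry HV s).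
- rewrite /rmul_fset big_imfset /=; last first.
    by move=> x y Fx Fy; apply: (accurate_mul_eq HFa).
  under eq_bigr do rewrite (li_rep_E_rideal_mul mulA HV).
  rewrite (sum_conj_isometries_eq1 _ Ff0 (fset_uniq F)).
  + by rewrite P_eq (li_rep_E_rideal mul1 HV).
  + exact: li_rep_isometry HV.
  + by move=> f g Ff Fg /eqP fg; apply: (li_rep_orthogonal mul1 HV); apply: HFa.
Qed.
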